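(* Let $N\ge 2$. For generic $x\in\mathbb{C}^N$ the Heisenberg bispectrum $B^H(x)$ determines the magnitude vector $(|x_0|,\dots,|x_{N-1}|)$ up to a cyclic shift and the Fourier-magnitude vector $(|\hat x[0]|,\dots,|\hat x[N-1]|)$ up to a cyclic shift: that is, if $x'\in\mathbb{C}^N$ satisfies $B^H(x')=B^H(x)$, then there exist $k_0,n_0\in\mathbb{Z}_N$ with $|x'_j|=|x_{j+k_0}|$ and $|\hat x'[k]|=|\hat x[k+n_0]|$ for all $j,k\in\mathbb{Z}_N$.
   Context: $\zeta=e^{2\pi i/N}$; indices modulo $N$. The discrete Fourier transform of $u\in\mathbb{C}^N$ is $\hat u[k]=\sum_{j=0}^{N-1}u_j\zeta^{-jk}$. For $x\in\mathbb{C}^N$ let $y=(|x_0|^2,\dots,|x_{N-1}|^2)$ and $z=(|\hat x[0]|^2,\dots,|\hat x[N-1]|^2)$, define $B^M(x)(i,j)=\hat y[i]\hat y[j]\hat y[N-i-j]$, $B^{FM}(x)(i,j)=\hat z[i]\hat z[j]\hat z[N-i-j]$ for $i,j\in\mathbb{Z}_N$, and $B^H(x)=(B^M(x),B^{FM}(x))$. ''Generic'' means: for all $x$ outside a fixed proper real algebraic subset of $\mathbb{C}^N\cong\mathbb{R}^{2N}$. *)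

From mathcomp Require Import all_boot all_algebra.
From mathcomp Require Import complex.
From mathcomp Require Import reals trigo.
From mathcomp Require Import mpoly.

Set Implicit Arguments.
Unset Strict Implicit.
Unset Printing Implicit Defensive.
Import GRing.Theory Num.Theory.
Local Open Scope ring_scope.

Definition zeta (R : realType) (N : nat) : R[i] :=
  Complex (cos (2 * pi / N%:R)) (sin (2 * pi / N%:R)).

(* Indices are taken in 'Z_N (integers mod N; we always assume 2 <= N). *)
Definition dft (R : realType) (N : nat) (u : 'Z_N -> R[i]) (k : 'Z_N) : R[i] :=
  \sum_(j : 'Z_N) u j * (zeta R N ^+ (val j * val k))^-1.

Definition sqmag (R : realType) (N : nat) (x : 'Z_N -> R[i]) : 'Z_N -> R[i] :=
  fun j => `|x j| ^+ 2.

Definition BM (R : realType) (N : nat) (x : 'Z_N -> R[i]) (i j : 'Z_N) : R[i] :=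
  let yh := dft (sqmag x) in yh i * yh j * yh (- (i + j)).

Definition BFM (R : realType) (N : nat) (x : 'Z_N -> R[i]) (i j : 'Z_N) : R[i] :=
  let zh := dft (sqmag (dft x)) in zh i * zh j * zh (- (i + j)).

(* B^H(x) = (B^M(x), B^FM(x)); equality of Heisenberg bispectra *)
Definition BH_eq (R : realType) (N : nat) (x x' : 'Z_N -> R[i]) : Prop :=
  (forall i j : 'Z_N, BM x' i j = BM x i j) /\
  (forall i j : 'Z_N, BFM x' i j = BFM x i j).

Definition realcoords (R : realType) (N : nat) (x : 'Z_N -> R[i])
  (m : 'I_(2 * N)) : R :=
  if (val m < N)%N then complex.Re (x (inZp (val m))) else complex.Im (x (inZp (val m - N))).

(* "P holds generically": P holds outside the zero set of a nonzero real
   polynomial in the 2N real coordinates (a proper real algebraic subset). *)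
Definition generic (R : realType) (N : nat) (P : ('Z_N -> R[i]) -> Prop) : Prop :=
  exists Q : mpoly.mpoly (2 * N) R, Q != 0 /\
    forall x : 'Z_N -> R[i], mpoly.meval (realcoords x) Q != 0 -> P x.

From mathcomp Require Import all_boot all_algebra.
From mathcomp Require Import complex.
From mathcomp Require Import reals trigo.
From mathcomp Require Import ring lra zify.
From mathcomp Require Import mpoly.
Import GRing.Theory Num.Theory.
Local Open Scope ring_scope.

(* For a signal y >= 0 whose DFT vanishes nowhere, the bispectrum
   yhat[u] yhat[v] yhat[-u-v] determines y up to a cyclic shift: the value at
   u = v = 0 is yhat[0]^3 with yhat[0] >= 0, so yhat'[0] = yhat[0]; then the
   ratio r k = yhat'[k] / yhat[k] is a character of Z_N, hence r k = zeta^(m k)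
   for some m, i.e. y' is y shifted by m.  Applied to y = |x|^2 and to
   z = |xhat|^2 this gives both shifts.  Nonvanishing of all yhat[k] and zhat[k]
   is the nonvanishing of the real polynomial prod_k |yhat[k]|^2 |zhat[k]|^2 in
   (Re x, Im x), which is not the zero polynomial because it does not vanish at
   x = 1 + delta_0. *)

Section Zeta.
Variables (R : realType) (n : nat).
Local Notation N := n.+1.
Local Notation theta := (2 * pi / N%:R : R).

Lemma zetaX k : zeta R N ^+ k = Complex (cos (k%:R * theta)) (sin (k%:R * theta)).
Proof.
elim: k => [|k IHk]; first by rewrite expr0 mul0r cos0 sin0.
rewrite exprSr IHk /zeta -[k.+1]addn1 natrD [(k%:R + 1) * _]mulrDl mul1r cosD sinD.
by apply/eqP; rewrite eq_complex /=; apply/andP; split; apply/eqP; ring.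
Qed.

Lemma zetaXN : zeta R N ^+ N = 1.
Proof.
rewrite zetaX mulrCA divff ?pnatr_eq0 // mulr1.
by rewrite (_ : 2 * pi = pi *+ 2) ?cos2pi ?sin2pi // mulr_natl.
Qed.

Lemma zetaX_neq1 k : (0 < k < N)%N -> zeta R N ^+ k != 1.
Proof.
move=> /andP[k_gt0 k_ltN]; rewrite zetaX; apply/negP => /eqP [cos1 _].
pose u : R := k%:R * pi / N%:R.
have theta_u : k%:R * theta = u *+ 2 by rewrite /u -mulr_natr; ring.
have sin_u_gt0 : 0 < sin u.
  apply: sin_gt0_pi; apply/andP; split.
    by rewrite /u divr_gt0 ?mulr_gt0 ?pi_gt0 ?ltr0n.
  by rewrite /u ltr_pdivrMr ?ltr0n // mulrC ltr_pM2l ?pi_gt0 // ltr_nat.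
move: cos1; rewrite theta_u cos_mulr2n cos2sin2 mulr2n; nra.
Qed.

Lemma zeta_prim : N.-primitive_root (zeta R N).
Proof.
have [m m_prim m_dvdN] := prim_order_exists (ltn0Sn n) zetaXN.
suff m_eqN : m = N by rewrite -m_eqN in m_prim *.
have m_gt0 := prim_order_gt0 m_prim.
apply/eqP; rewrite eqn_leq dvdn_leq //= leqNgt; apply/negP => m_ltN.
by move: (@zetaX_neq1 m); rewrite m_gt0 m_ltN prim_expr_order // eqxx => /(_ isT).
Qed.

End Zeta.

Section Characters.
Variables (R : realType) (n : nat).
Local Notation N := n.+2.
Local Notation zt := (zeta R N).

Definition chi (u : 'Z_N) : R[i] := zt ^+ val u.

Lemma chi_neq0 u : chi u != 0.
Proof. by rewrite expf_neq0 // (prim_root_eq0 (zeta_prim R n.+1)). Qed.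

Lemma chi0 : chi 0 = 1.
Proof. exact: expr0. Qed.

Lemma chiD u v : chi (u + v) = chi u * chi v.
Proof. by rewrite /chi /= (prim_expr_mod (zeta_prim R n.+1)) exprD. Qed.

Lemma chiN u : chi (- u) = (chi u)^-1.
Proof. by apply: (mulIf (chi_neq0 u)); rewrite -chiD addNr chi0 mulVf ?chi_neq0. Qed.

Lemma chiM u v : chi (u * v) = zt ^+ (val u * val v).
Proof. by rewrite /chi /= (prim_expr_mod (zeta_prim R n.+1)). Qed.

Lemma sum_chiM k : \sum_(j : 'Z_N) chi (j * k) = (N * (k == 0))%:R.
Proof.
under eq_bigr do rewrite chiM mulnC exprM.
change (\sum_(j < N) (zt ^+ val k) ^+ j = (N * (k == 0))%:R).
have [->|k_neq0] := eqVneq k 0.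
  by under eq_bigr do rewrite expr0 expr1n; rewrite sumr_const card_ord muln1.
have w_neq1 : zt ^+ val k != 1.
  apply: zetaX_neq1; rewrite ltn_ord andbT lt0n.
  by apply: contra k_neq0 => /eqP k0; apply/eqP/val_inj.
have := subrX1 (zt ^+ val k) N; rewrite exprAC zetaXN // expr1n subrr.
by move/esym/eqP; rewrite mulf_eq0 subr_eq0 (negPf w_neq1) muln0 => /eqP.
Qed.

Lemma sum_chiMV k : \sum_(j : 'Z_N) (chi (j * k))^-1 = (N * (k == 0))%:R.
Proof. by under eq_bigr do rewrite -chiN -mulrN; rewrite sum_chiM oppr_eq0. Qed.

End Characters.

Section DFT.
Context {R : realType} {n : nat}.
Local Notation N := n.+2.
Local Notation Z := 'Z_N.
Local Notation chi := (@chi R n).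

Lemma dftE (f : Z -> R[i]) k : dft f k = \sum_(j : Z) f j * (chi (j * k))^-1.
Proof. by apply: eq_bigr => j _; rewrite chiM. Qed.

Lemma eq_dft (f g : Z -> R[i]) : f =1 g -> dft f =1 dft g.
Proof. by move=> fg k; apply: eq_bigr => j _; rewrite fg. Qed.

Lemma dft_inversion (f : Z -> R[i]) j :
  \sum_(k : Z) dft f k * chi (j * k) = N%:R * f j.
Proof.
under eq_bigr do rewrite dftE mulr_suml.
rewrite exchange_big /=.
under eq_bigr => l _.
  under eq_bigr do rewrite -mulrA -chiN -chiD -mulNr -mulrDl [(_ + _) * _]mulrC.
  rewrite -mulr_sumr sum_chiM; over.
rewrite (bigD1 j) //= addNr eqxx muln1 big1 ?addr0 1?mulrC // => l l_neq_j.
by rewrite addr_eq0 eqr_opp (negPf l_neq_j) muln0 mulr0.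
Qed.

Lemma dft_inj (f g : Z -> R[i]) : dft f =1 dft g -> f =1 g.
Proof.
move=> fg j; apply: (@mulfI _ N%:R); first by rewrite pnatr_eq0.
by rewrite -!dft_inversion; apply: eq_bigr => k _; rewrite fg.
Qed.

Lemma dft_shift (f : Z -> R[i]) c k :
  dft (fun j => f (j + c)) k = chi (c * k) * dft f k.
Proof.
rewrite !dftE mulr_sumr [RHS](reindex_inj (addIr c)) /=.
apply: eq_bigr => j _; rewrite mulrDl chiD invfM.
by rewrite [RHS]mulrC -mulrA divfK ?chi_neq0.
Qed.

Lemma dft0_ge0 (f : Z -> R[i]) : (forall j, 0 <= f j) -> 0 <= dft f 0.
Proof.
by move=> f_ge0; rewrite dftE; apply: sumr_ge0 => j _; rewrite mulr0 chi0 invr1 mulr1.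
Qed.

Lemma Zp_morph_chi (r : Z -> R[i]) :
  r 0 = 1 -> {morph r : u v / u + v >-> u * v} -> exists m : Z, forall k, r k = chi (m * k).
Proof.
move=> r0 rD.
have r_nat m : r m%:R = r 1 ^+ m.
  by elim: m => [|m IHm]; rewrite ?r0 ?expr0 // mulrSr rD IHm exprSr.
have r1N : r 1 ^+ N = 1 by rewrite -r_nat (@pchar_Zp N).
have [m r1E] := prim_rootP (zeta_prim R n.+1) r1N.
by exists m => k; rewrite chiM -[k in LHS]natr_Zp r_nat r1E -exprM.
Qed.

Definition bispectrum (f : Z -> R[i]) (u v : Z) : R[i] :=
  dft f u * dft f v * dft f (- (u + v)).

Lemma bispectrum_shift {y y' : Z -> R[i]} :
  (forall j, 0 <= y j) -> (forall j, 0 <= y' j) -> (forall k, dft y k != 0) ->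
  (forall u v, bispectrum y' u v = bispectrum y u v) ->
  exists c : Z, forall j, y' j = y (j + c).
Proof.
move=> y_ge0 y'_ge0 y_neq0 eqB.
have dft0E : dft y' 0 = dft y 0.
  have := eqB 0 0; rewrite /bispectrum addr0 oppr0 -!expr2 -!exprSr => /eqP.
  by rewrite eqrXn2 ?dft0_ge0 // => /eqP.
have dftNE k : dft y' k * dft y' (- k) = dft y k * dft y (- k).
  have := eqB k 0; rewrite /bispectrum addr0 dft0E ![_ * dft y 0 * _]mulrAC.
  exact/mulIf/y_neq0.
pose r k := dft y' k / dft y k.
have rN k : r k * r (- k) = 1 by rewrite /r mulf_div dftNE divff ?mulf_neq0.
have rD : {morph r : u v / u + v >-> u * v}.
  move=> u v; have r3 : r u * r v * r (- (u + v)) = 1.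
    rewrite /r !mulf_div; move: (eqB u v); rewrite /bispectrum => ->.
    by rewrite divff ?mulf_neq0.
  by rewrite -[LHS]mulr1 -r3 mulrCA rN mulr1.
have [|m rE] := @Zp_morph_chi r _ rD; first by rewrite /r dft0E divff.
exists m; apply: dft_inj => k.
by rewrite dft_shift -rE /r divfK.
Qed.

End DFT.

Section ComplexPolynomials.
Context {R : realType} {m : nat}.
Local Notation P := {mpoly R[m]}.

(* A pair (p, q) of real polynomials stands for the complex-valued polynomial
   p + i q. *)
Definition cpeval (v : 'I_m -> R) (p : P * P) : R[i] := Complex p.1.@[v] p.2.@[v].
Definition cpC (c : R[i]) : P * P := ((complex.Re c)%:MP, (complex.Im c)%:MP).
Definition cpmul (p q : P * P) : P * P := (p.1 * q.1 - p.2 * q.2, p.1 * q.2 + p.2 * q.1).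
Definition cpsum {I : finType} (F : I -> P * P) : P * P :=
  (\sum_i (F i).1, \sum_i (F i).2).
Definition cpsqnorm (p : P * P) : P := p.1 ^+ 2 + p.2 ^+ 2.

Lemma cpevalC v c : cpeval v (cpC c) = c.
Proof. by rewrite /cpeval !mevalC; case: c. Qed.

Lemma cpevalM v p q : cpeval v (cpmul p q) = cpeval v p * cpeval v q.
Proof. by rewrite /cpeval /= mevalB mevalD !mevalM. Qed.

Lemma cpeval_sum v (I : finType) (F : I -> P * P) :
  cpeval v (cpsum F) = \sum_i cpeval v (F i).
Proof.
apply: (big_ind3 (fun s1 s2 c => Complex s1.@[v] s2.@[v] = c)) => //.
- by rewrite !meval0.
- by move=> a1 a2 a3 b1 b2 b3 <- <-; rewrite !mevalD.
Qed.

Lemma cpsqnormE v p : real_complex R (cpsqnorm p).@[v] = `|cpeval v p| ^+ 2.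
Proof. by rewrite -add_Re2_Im2 /cpsqnorm rmorphD !rmorphXn. Qed.

Lemma cpsqnorm_neq0 v p : ((cpsqnorm p).@[v] != 0) = (cpeval v p != 0).
Proof.
have -> : (cpeval v p == 0) = (`|cpeval v p| ^+ 2 == 0) by rewrite expf_eq0 normr_eq0.
by rewrite -cpsqnormE; congr negb; apply/eqP/eqP => [->|[]].
Qed.

End ComplexPolynomials.

Section GenericityPolynomial.
Variables (R : realType) (n : nat).
Local Notation N := n.+2.
Local Notation Z := 'Z_N.
Local Notation P := {mpoly R[2 * N]}.

Lemma re_coord_subproof (j : Z) : (val j < 2 * N)%N.
Proof. have : (val j < N)%N := ltn_ord j; lia. Qed.

Lemma im_coord_subproof (j : Z) : (N + val j < 2 * N)%N.
Proof. have : (val j < N)%N := ltn_ord j; lia. Qed.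

Definition re_coord (j : Z) : 'I_(2 * N) := Ordinal (re_coord_subproof j).
Definition im_coord (j : Z) : 'I_(2 * N) := Ordinal (im_coord_subproof j).

Lemma realcoords_re (x : Z -> R[i]) j : realcoords x (re_coord j) = complex.Re (x j).
Proof. by rewrite /realcoords /= ltn_ord valZpK. Qed.

Lemma realcoords_im (x : Z -> R[i]) j : realcoords x (im_coord j) = complex.Im (x j).
Proof. by rewrite /realcoords /= ltnNge leq_addr addKn valZpK. Qed.

Definition cpX (j : Z) : P * P := ('X_(re_coord j), 'X_(im_coord j)).

Lemma cpevalX x j : cpeval (realcoords x) (cpX j) = x j.
Proof. by rewrite /cpeval !mevalXU realcoords_re realcoords_im; case: (x j). Qed.

Definition cpdft (F : Z -> P * P) (k : Z) : P * P :=
  cpsum (fun j => cpmul (F j) (cpC (chi R n (j * k))^-1)).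

Definition cpsqmag (F : Z -> P * P) (j : Z) : P * P := (cpsqnorm (F j), 0).

Lemma cpeval_dft v F k : cpeval v (cpdft F k) = dft (fun j => cpeval v (F j)) k.
Proof. by rewrite dftE cpeval_sum; apply: eq_bigr => j _; rewrite cpevalM cpevalC. Qed.

Lemma cpeval_dftX x k : cpeval (realcoords x) (cpdft cpX k) = dft x k.
Proof. by rewrite cpeval_dft; apply: eq_dft => j; rewrite cpevalX. Qed.

Lemma cpeval_dft_sqmag v F (f : Z -> R[i]) k : (forall j, cpeval v (F j) = f j) ->
  cpeval v (cpdft (cpsqmag F) k) = dft (sqmag f) k.
Proof.
move=> Ff; rewrite cpeval_dft; apply: eq_dft => j.
by rewrite /sqmag -Ff -cpsqnormE /cpeval meval0.
Qed.

Definition genericity_poly : P :=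
  \prod_(k : Z) (cpsqnorm (cpdft (cpsqmag cpX) k) *
                 cpsqnorm (cpdft (cpsqmag (cpdft cpX)) k)).

Lemma genericity_poly_neq0E x : (genericity_poly.@[realcoords x] != 0) =
  [forall k, (dft (sqmag x) k != 0) && (dft (sqmag (dft x)) k != 0)].
Proof.
have factorE k : (cpsqnorm (cpdft (cpsqmag cpX) k)).@[realcoords x] *
                 (cpsqnorm (cpdft (cpsqmag (cpdft cpX)) k)).@[realcoords x] != 0 =
                 (dft (sqmag x) k != 0) && (dft (sqmag (dft x)) k != 0).
  by rewrite mulf_eq0 negb_or !cpsqnorm_neq0 !(cpeval_dft_sqmag _ _ _ _ (cpevalX x))
             !(cpeval_dft_sqmag _ _ _ _ (cpeval_dftX x)).
rewrite rmorph_prod; apply/prodf_neq0/forallP => [nz k | nz k _].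
  by rewrite -factorE -rmorphM nz.
by rewrite rmorphM factorE nz.
Qed.

End GenericityPolynomial.

Section Witness.
Variables (R : realType) (n : nat).
Local Notation N := n.+2.
Local Notation Z := 'Z_N.
Local Notation const_delta a b := (fun j : Z => ((a + b * (j == 0%R))%N%:R : R[i])).

Lemma dft_const_delta {f : Z -> R[i]} {a b : nat} : f =1 const_delta a b ->
  dft f =1 const_delta b (a * N).
Proof.
move=> fE k; rewrite dftE.
under eq_bigr do rewrite fE natrD mulrDl natrM.
rewrite big_split /= -mulr_sumr sum_chiMV (bigD1 0) //= big1 => [|j /negPf ->].
  by rewrite mul0r chi0 invr1 !mulr1 addr0 addrC -natrM -natrD mulnA.
by rewrite mulr0 mul0r.
Qed.

Lemma sqmag_const_delta {f : Z -> R[i]} {a b : nat} : f =1 const_delta a b ->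
  sqmag f =1 const_delta (a * a) (2 * a * b + b * b).
Proof.
move=> fE j; rewrite /sqmag fE normr_nat -natrX.
by congr (_%:R); case: (j == 0); nia.
Qed.

Lemma dft_const_delta_neq0 {f : Z -> R[i]} {a b : nat} :
  f =1 const_delta a b -> (0 < b)%N -> forall k, dft f k != 0.
Proof.
by move=> /dft_const_delta fE b_gt0 k; rewrite fE pnatr_eq0 -lt0n ltn_addr.
Qed.

Lemma genericity_poly_neq0 : genericity_poly R n != 0.
Proof.
pose x0 := const_delta 1 1.
have dft_x0 := dft_const_delta (frefl x0).
have : [forall k, (dft (sqmag x0) k != 0) && (dft (sqmag (dft x0)) k != 0)].
  apply/forallP => k; apply/andP; split.
    exact: dft_const_delta_neq0 (sqmag_const_delta (frefl x0)) isT k.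
  by apply: dft_const_delta_neq0 (sqmag_const_delta dft_x0) _ k; lia.
by apply: contraTneq => Q0; rewrite -genericity_poly_neq0E Q0 meval0 eqxx.
Qed.

End Witness.

Theorem theorem5p3 (R : realType) (N : nat) (hN : (2 <= N)%N) :
  generic (fun x : 'Z_N -> R[i] =>
    forall x' : 'Z_N -> R[i], BH_eq x' x ->
      exists k0 n0 : 'Z_N,
        forall j k : 'Z_N,
          `|x' j| = `|x (j + k0)| /\ `|dft x' k| = `|dft x (k + n0)|).
Proof.
case: N hN => [|[|n]] // _.
exists (genericity_poly R n); split; first exact: genericity_poly_neq0.
move=> x; rewrite genericity_poly_neq0E => /forallP nz x' [eqBM eqBFM].
have sqmag_ge0 (f : 'Z_n.+2 -> R[i]) j : 0 <= sqmag f j by rewrite exprn_ge0.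
have [k0 shift_k0] := bispectrum_shift (sqmag_ge0 x) (sqmag_ge0 x')
  (fun k => (andP (nz k)).1) (fun u v => esym (eqBM u v)).
have [n0 shift_n0] := bispectrum_shift (sqmag_ge0 _) (sqmag_ge0 _)
  (fun k => (andP (nz k)).2) (fun u v => esym (eqBFM u v)).
have norm_eq (f g : 'Z_n.+2 -> R[i]) u v : sqmag f u = sqmag g v -> `|f u| = `|g v|.
  by move/eqP; rewrite eqrXn2 // => /eqP.
by exists k0, n0 => j k; split; apply: norm_eq; [apply: shift_k0 | apply: shift_n0].
Qed.
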